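(* Let $A\in\mathbb{R}^{n\times n}$, $B\in\mathbb{R}^{m\times m}$, $C:=\operatorname{diag}(A,B)$. Fix $k\in\{1,\dots,n+m\}$, let $r:=\binom{n+m}{k}$, $i_1:=\max\{0,k-n\}$, $i_2:=\min\{m,k\}$. For $i\in\{i_1,\dots,i_2\}$ let $\mu_i$ be the matrix measure induced by an $L_{p_i}$ vector norm $|\cdot|_{p_i}$ (the $p_i$ possibly different). Partition $x\in\mathbb{R}^r$ as $x=(x^{i_1},\dots,x^{i_2})$ with $x^i\in\mathbb{R}^{\binom{n}{k-i}\binom{m}{i}}$, let $|\cdot|_0$ be a monotonic norm on $\mathbb{R}^{i_2-i_1+1}$, and define the norm $|x|:=\big|\,(|x^{i_1}|_{p_{i_1}},\dots,|x^{i_2}|_{p_{i_2}})^T\big|_0$. Let $P\in\mathbb{R}^{r\times r}$ be a permutation matrix such that $C^{[k]}=P\,\operatorname{diag}_{i\in\{i_1,\dots,i_2\}}(A^{[k-i]}\oplus B^{[i]})\,P^{-1}$ (such $P$ exists), define the norm $|x|_P:=|P^{-1}x|$, and let $\mu_P$ be the matrix measure induced by $|\cdot|_P$. Then \[ \mu_P\big(C^{[k]}\big)=\max_{i\in\{i_1,\dots,i_2\}}\big\{\mu_i(A^{[k-i]})+\mu_i(B^{[i]})\big\}, \] and \[ \min_{i\in\{i_1,\dots,i_2\}}\big\{-\mu_i(-A^{[k-i]})-\mu_i(-B^{[i]})\big\}\le\mu_P\big(C^{[k]}\big). \]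
   Context: For $M\in\mathbb{R}^{p\times q}$, $M^{(k)}$ is the matrix of all $k\times k$ minors in lexicographic order; for square $M$, $M^{[k]}:=\frac{d}{dt}(\exp(Mt))^{(k)}|_{t=0}$, with $M^{(0)}:=1$, $M^{[0]}:=0$. Kronecker sum: $X\oplus Y:=X\otimes I_b+I_a\otimes Y$ for $X\in\mathbb{R}^{a\times a},Y\in\mathbb{R}^{b\times b}$. $\operatorname{diag}_{i\in\{i_1,\dots,i_2\}}(M_i)$ is block-diagonal with blocks $M_{i_1},\dots,M_{i_2}$ in order. A norm $|\cdot|_0$ on $\mathbb{R}^s$ is monotonic if $|u|_0\le|v|_0$ whenever $|u_j|\le|v_j|$ for all $j$. The matrix measure induced by a vector norm with induced matrix norm $\|\cdot\|$ is $\mu(M):=\lim_{\varepsilon\to0^+}(\|I+\varepsilon M\|-1)/\varepsilon$. *)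

From HB Require Import structures.
From mathcomp Require Import all_boot all_order all_algebra.
From mathcomp Require Import all_classical all_reals all_analysis.
From mathcomp Require Import zify.
Set Implicit Arguments. Unset Strict Implicit. Unset Printing Implicit Defensive.
Import Order.TTheory GRing.Theory Num.Theory.
Import numFieldNormedType.Exports.
Local Open Scope classical_set_scope.
Local Open Scope ring_scope.

(** k-subsets of [lo, lo+len) as increasing lists, in lexicographic order. *)
Fixpoint subs (lo len k : nat) : seq (seq nat) :=
  match len with
  | 0 => if k is 0 then [:: [::]] else [::]
  | len'.+1 => if k is k'.+1
               then map (cons lo) (subs lo.+1 len' k') ++ subs lo.+1 len' k
               else [:: [::]]
  end.

Section Mx.
Variable R : realType.

(** entry access by natural numbers (0 outside the range) *)
Definition mxnat p q (M : 'M[R]_(p, q)) (r c : nat) : R :=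
  match insub r, insub c with
  | Some i, Some j => M i j
  | _, _ => 0
  end.

Definition compound (k p q : nat) (M : 'M[R]_(p, q)) : 'M[R]_('C(p, k), 'C(q, k)) :=
  \matrix_(i, j)
    \det (\matrix_(a < k, b < k)
      mxnat M (nth 0%N (nth [::] (subs 0 p k) i) a)
              (nth 0%N (nth [::] (subs 0 q k) j) b)).

Definition expmx (s : nat) (M : 'M[R]_s) : 'M[R]_s :=
  \matrix_(i, j) limn (series (fun l : nat => (M ^+ l) i j / (l`!)%:R)).

Definition addcomp (k s : nat) (M : 'M[R]_s) : 'M[R]_('C(s, k)) :=
  \matrix_(i, j) derive1 (fun t : R => compound k (expmx (t *: M)) i j) 0.

Definition kron a b (X : 'M[R]_a) (Y : 'M[R]_b) : 'M[R]_(a * b) :=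
  \matrix_(r, c) (mxnat X (r %/ b) (c %/ b) * mxnat Y (r %% b) (c %% b)).
Definition kronsum a b (X : 'M[R]_a) (Y : 'M[R]_b) : 'M[R]_(a * b) :=
  kron X 1%:M + kron 1%:M Y.

Definition Lp_norm (p : \bar R) {s : nat} (x : 'cV[R]_s) : R :=
  match p with
  | EFin q => (\sum_(j < s) `|x j 0| `^ q) `^ (q^-1)
  | _ => \big[Num.max/0]_(j < s) `|x j 0|
  end.

Definition is_norm (s : nat) (nv : 'cV[R]_s -> R) : Prop :=
  [/\ forall x, nv x = 0 -> x = 0,
      forall (a : R) x, nv (a *: x) = `|a| * nv x &
      forall x y, nv (x + y) <= nv x + nv y].
Definition monotonic (s : nat) (nv : 'cV[R]_s -> R) : Prop :=
  forall u v : 'cV[R]_s, (forall j, `|u j 0| <= `|v j 0|) -> nv u <= nv v.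

Definition opnorm (s : nat) (nv : 'cV[R]_s -> R) (M : 'M[R]_s) : R :=
  sup [set nv (M *m x) / nv x | x in [set x : 'cV[R]_s | x != 0]].
Definition matmeas (s : nat) (nv : 'cV[R]_s -> R) (M : 'M[R]_s) : R :=
  lim ((fun e : R => (opnorm nv (1%:M + e *: M) - 1) / e) @ 0^'+).

End Mx.

(** index range i1 = max(0, k-n) (truncated subtraction), i2 = min(m, k) *)
Definition ilo (n k : nat) : nat := (k - n)%N.
Definition ihi (m k : nat) : nat := minn m k.
Definition bdim (n m k : nat) (j : 'I_(ihi m k - ilo n k).+1) : nat :=
  ('C(n, k - (ilo n k + j)) * 'C(m, ilo n k + j))%N.
Arguments bdim : clear implicits.

Lemma bdim_sum (n m k : nat) : (k <= n + m)%N ->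
  (\sum_(j < (ihi m k - ilo n k).+1) bdim n m k j)%N = 'C(n + m, k).
Proof.
move=> hk; rewrite addnC -binomial.Vandermonde /bdim /ilo /ihi.
rewrite -(big_mkord xpredT (fun j => 'C(m, j) * 'C(n, k - j))%N).
have h1 : (k - n <= (minn m k).+1)%N by lia.
have h2 : ((minn m k).+1 <= k.+1)%N by lia.
rewrite (big_cat_nat (n := (k - n)%N)) //=; last by lia.
rewrite (big_cat_nat (n := (minn m k).+1) h1 h2) /=; apply/esym.
rewrite big1_seq ?add0n; last first.
  move=> j /andP[_]; rewrite mem_index_iota => /andP[_ hj]; rewrite [X in (_ * X)%N]bin_small ?muln0 //.
  lia.
rewrite [X in (_ + X)%N]big1_seq ?addn0; last first.
  move=> j /andP[_]; rewrite mem_index_iota => /andP[hj hj2]; rewrite [X in (X * _)%N]bin_small ?mul0n //.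
  lia.
rewrite -[X in \sum_(X <= _ < _) _]add0n big_addn -subSn; last by lia.
rewrite big_mkord; apply: eq_bigr => j _.
by rewrite mulnC addnC.
Qed.

Definition blockD (R : realType) (n m k : nat) (A : 'M[R]_n) (B : 'M[R]_m)
  : 'M[R]_(\sum_(j < (ihi m k - ilo n k).+1) bdim n m k j) :=
  @mxdiag _ _ (bdim n m k)
    (fun j => kronsum (addcomp (k - (ilo n k + j)) A) (addcomp (ilo n k + j) B)).

(* The matrix measure of M is the right derivative at 0 of e |-> ||I + e M||, whose difference
   quotient is nondecreasing (convexity), so the limit exists. For induced L_p norms the
   norm of a Kronecker product is the product of the norms (tensors u (x) v give the lower
   bound), and I + e (A (+) B) = (I + e A) (x) (I + e B) - e^2 (A (x) B), so the difference
   quotients of A (+) B and of A, B differ by O(e): mu_p(A (+) B) = mu_p(A) + mu_p(B).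
   For the norm assembled from block norms by a monotonic outer norm, the induced norm of
   a block-diagonal matrix is its largest block norm, so the measure of diag_i(M_i) is the
   largest mu_i(M_i); the permutation P transports the norm |.|_P to that block norm.
   The lower bound is -mu(-M) <= mu(M), from 2 I = (I + e M) + (I - e M). *)

From HB Require Import structures.
From mathcomp Require Import all_boot all_order all_algebra.
From mathcomp Require Import all_classical all_reals all_analysis.
From mathcomp Require Import mxtens ring lra zify.
Import Order.TTheory GRing.Theory Num.Theory.
Import numFieldNormedType.Exports.
Local Open Scope classical_set_scope.
Local Open Scope ring_scope.
Set Implicit Arguments. Unset Strict Implicit. Unset Printing Implicit Defensive.

(** * Induced norms and matrix measures *)

Lemma delta_mx_neq0 (R : nzRingType) m n (i : 'I_m) (j : 'I_n) :
  delta_mx i j != 0 :> 'M[R]_(m, n).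
Proof.
by apply/eqP => /matrixP/(_ i j)/eqP; rewrite !mxE !eqxx oner_eq0.
Qed.

Lemma col_sum_delta (R : nzRingType) s (x : 'cV[R]_s) :
  x = \sum_j x j 0 *: delta_mx j 0.
Proof. by rewrite {1}[x]matrix_sum_delta; apply: eq_bigr => j _; rewrite big_ord1. Qed.

Section InducedNorm.
Variables (R : realType) (s : nat) (nv : 'cV[R]_s -> R).
Hypothesis nv_norm : is_norm nv.
Implicit Types (x : 'cV[R]_s) (M N : 'M[R]_s).

Lemma norm0 : nv 0 = 0.
Proof. by case: nv_norm => _ nvZ _; rewrite -(scale0r 0) nvZ normr0 mul0r. Qed.

Lemma normN x : nv (- x) = nv x.
Proof. by case: nv_norm => _ nvZ _; rewrite -scaleN1r nvZ normrN1 mul1r. Qed.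

Lemma norm_ge0 x : 0 <= nv x.
Proof.
case: nv_norm => _ _ nvD; have := nvD x (- x).
by rewrite subrr norm0 normN -mulr2n pmulrn_lge0.
Qed.

Lemma norm_gt0 x : x != 0 -> 0 < nv x.
Proof.
case: nv_norm => nv_eq0 _ _ x_neq0; rewrite lt_neqAle norm_ge0 andbT eq_sym.
by apply: contra x_neq0 => /eqP/nv_eq0 ->.
Qed.

Lemma norm_sum (I : finType) (F : I -> 'cV[R]_s) :
  nv (\sum_i F i) <= \sum_i nv (F i).
Proof.
case: nv_norm => _ _ nvD; elim/big_ind2: _ => [|a b c d ab cd|//].
  by rewrite norm0.
exact: le_trans (nvD _ _) (lerD ab cd).
Qed.

Lemma norm_col_scale k (c : 'I_s -> R) :
  nv (\col_j (k * c j)) = `|k| * nv (\col_j c j).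
Proof.
by case: nv_norm => _ nvZ _; rewrite -nvZ; congr nv; apply/matrixP => i l; rewrite !mxE.
Qed.

Hypothesis nv_mono : monotonic nv.

Lemma monotonic_col_le (c d : 'I_s -> R) : (forall j, 0 <= c j <= d j) ->
  nv (\col_j c j) <= nv (\col_j d j).
Proof.
move=> cd; apply: nv_mono => j; rewrite !mxE.
by have /andP[c0 cdj] := cd j; rewrite !ger0_norm // (le_trans c0).
Qed.

Lemma coord_norm_le x j : `|x j 0| * nv (delta_mx j 0) <= nv x.
Proof.
case: nv_norm => _ nvZ _; rewrite -nvZ; apply: nv_mono => i; rewrite !mxE eqxx andbT.
by case: eqVneq => [->|_]; rewrite ?mulr1 // mulr0 normr0.
Qed.

Lemma opnorm_bounded M : exists K, forall x, nv (M *m x) <= K * nv x.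
Proof.
case: nv_norm => _ nvZ _.
exists (\sum_j nv (M *m delta_mx j 0) / nv (delta_mx j 0)) => x.
rewrite {1}[x]col_sum_delta mulmx_sumr mulr_suml.
apply: le_trans (norm_sum _) _; apply: ler_sum => j _.
rewrite -scalemxAr nvZ mulrC [leRHS]mulrAC -mulrA ler_wpM2l ?norm_ge0 //.
by rewrite ler_pdivlMr ?norm_gt0 ?delta_mx_neq0 // coord_norm_le.
Qed.

Local Notation ratios M := [set nv (M *m x) / nv x | x in [set x | x != 0]].

Hypothesis s_gt0 : (0 < s)%N.
Let j0 : 'I_s := Ordinal s_gt0.

Lemma ratios_has_sup M : has_sup (ratios M).
Proof.
split; first by exists (nv (M *m delta_mx j0 0) / nv (delta_mx j0 0)), (delta_mx j0 0);
  rewrite /= ?delta_mx_neq0.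
have [K MK] := opnorm_bounded M.
by exists K => _ [x /= x_neq0 <-]; rewrite ler_pdivrMr ?norm_gt0.
Qed.

Lemma opnorm_ub M x : nv (M *m x) <= opnorm nv M * nv x.
Proof.
have [->|x_neq0] := eqVneq x 0; first by rewrite mulmx0 norm0 mulr0.
rewrite -ler_pdivrMr ?norm_gt0 //.
by apply: sup_upper_bound; [exact: ratios_has_sup | exists x].
Qed.

Lemma opnorm_le M c : (forall x, nv (M *m x) <= c * nv x) -> opnorm nv M <= c.
Proof.
move=> Mc; apply: ge_sup; first by case: (ratios_has_sup M).
by move=> _ [x /= x_neq0 <-]; rewrite ler_pdivrMr ?norm_gt0.
Qed.

Lemma opnorm_ge0 M : 0 <= opnorm nv M.
Proof.
have e_gt0 : 0 < nv (delta_mx j0 0) by rewrite norm_gt0 ?delta_mx_neq0.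
rewrite -(pmulr_lge0 _ e_gt0); apply: le_trans (opnorm_ub M _).
exact: norm_ge0.
Qed.

Lemma opnormD M N : opnorm nv (M + N) <= opnorm nv M + opnorm nv N.
Proof.
case: nv_norm => _ _ nvD; apply: opnorm_le => x; rewrite mulmxDl mulrDl.
by apply: le_trans (nvD _ _) _; apply: lerD; exact: opnorm_ub.
Qed.

Lemma opnormZ a M : opnorm nv (a *: M) <= `|a| * opnorm nv M.
Proof.
case: nv_norm => _ nvZ _; apply: opnorm_le => x.
by rewrite -scalemxAl nvZ -mulrA ler_wpM2l // opnorm_ub.
Qed.

Lemma opnormN M : opnorm nv (- M) = opnorm nv M.
Proof.
have opnormN_le X : opnorm nv (- X) <= opnorm nv X.
  by rewrite -scaleN1r; apply: le_trans (opnormZ _ _) _; rewrite normrN1 mul1r.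
by apply/le_anti; rewrite opnormN_le -{1}[M]opprK opnormN_le.
Qed.

Lemma opnorm1 : opnorm nv 1%:M = 1.
Proof.
apply/le_anti/andP; split; first by apply: opnorm_le => x; rewrite mul1mx mul1r.
have := opnorm_ub 1%:M (delta_mx j0 0); rewrite mul1mx -{1}[nv _]mul1r.
by rewrite ler_pM2r // norm_gt0 ?delta_mx_neq0.
Qed.

Definition meas_quot M (e : R) := (opnorm nv (1%:M + e *: M) - 1) / e.

Lemma meas_quot_ge M e : 0 < e -> - opnorm nv M <= meas_quot M e.
Proof.
move=> e_gt0; rewrite /meas_quot ler_pdivlMr // mulNr lerBrDr addrC lerBlDr.
have := opnormD (1%:M + e *: M) ((- e) *: M).
rewrite scaleNr addrK opnorm1 opnormN => /le_trans; apply; rewrite lerD2l.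
by apply: le_trans (opnormZ _ _) _; rewrite gtr0_norm // mulrC.
Qed.

Lemma meas_quot_nondecreasing M e1 e2 : 0 < e1 -> e1 <= e2 ->
  meas_quot M e1 <= meas_quot M e2.
Proof.
move=> e1_gt0 e12; have e2_gt0 := lt_le_trans e1_gt0 e12; rewrite /meas_quot.
set t := e1 / e2; have t_gt0 : 0 < t by rewrite divr_gt0.
have t_le1 : t <= 1 by rewrite ler_pdivrMr // mul1r.
have -> : 1%:M + e1 *: M = (1 - t) *: 1%:M + t *: (1%:M + e2 *: M).
  by rewrite scalerDr scalerA mulfVK ?gt_eqF // scalerBl scale1r addrA subrK.
have convex : opnorm nv ((1 - t) *: 1%:M + t *: (1%:M + e2 *: M)) <=
              (1 - t) + t * opnorm nv (1%:M + e2 *: M).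
  apply: le_trans (opnormD _ _) _; apply: lerD; apply: le_trans (opnormZ _ _) _.
    by rewrite opnorm1 mulr1 ger0_norm // subr_ge0.
  by rewrite gtr0_norm.
rewrite ler_pdivrMr //; apply: le_trans (lerB convex (lexx 1)) _.
by rewrite /t le_eqVlt; apply/orP; left; apply/eqP; field; rewrite gt_eqF.
Qed.

Lemma meas_quot_cvg M : meas_quot M e @[e --> 0^'+] --> matmeas nv M.
Proof.
apply: nondecreasing_at_right_is_cvgr.
  near=> x => a b; rewrite !in_itv /= => /andP[a_gt0 _] _ ab.
  exact: meas_quot_nondecreasing a_gt0 ab.
near=> x; exists (- opnorm nv M) => y [e]; rewrite /= in_itv /= => /andP[e_gt0 _] <-.
exact: meas_quot_ge.
Unshelve. all: by end_near.
Qed.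

Lemma matmeasN_le M : - matmeas nv (- M) <= matmeas nv M.
Proof.
rewrite -subr_ge0 opprK.
have quotD_cvg : meas_quot M e + meas_quot (- M) e @[e --> 0^'+] -->
                 matmeas nv M + matmeas nv (- M).
  by apply: cvgD; exact: meas_quot_cvg.
rewrite -(cvg_lim _ quotD_cvg) //; apply: limr_ge; first exact: cvgP quotD_cvg.
near=> e; have e_gt0 : 0 < e by near: e; exact: nbhs_right_gt.
rewrite /meas_quot -mulrDl divr_ge0 ?(ltW e_gt0) //.
set X := 1%:M + e *: M; set Y := 1%:M + e *: - M.
have halfXY : 2^-1 *: (X + Y) = 1%:M.
  rewrite /X /Y scalerN addrACA subrr addr0; apply/matrixP => i j; rewrite !mxE.
  by case: (i == j); rewrite /= ?addr0 ?mulr0 //; field.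
have : 1 <= 2^-1 * (opnorm nv X + opnorm nv Y).
  rewrite -[X in X <= _]opnorm1 -halfXY; apply: le_trans (opnormZ _ _) _.
  by rewrite ger0_norm // ler_wpM2l // opnormD.
lra.
Unshelve. all: by end_near.
Qed.

End InducedNorm.

Arguments meas_quot_cvg {R s nv} nv_norm nv_mono s_gt0 M.

(** * L_p norms *)

Lemma mxnatE (R : realType) p q (M : 'M[R]_(p, q)) (i : 'I_p) (j : 'I_q) :
  mxnat M i j = M i j.
Proof. by rewrite /mxnat !valK. Qed.

Lemma mxnat_col (R : realType) s (x : 'cV[R]_s) (j : 'I_s) : mxnat x j 0 = x j 0.
Proof. exact: (mxnatE x j 0). Qed.

Lemma mxnat_col_out (R : realType) s (x : 'cV[R]_s) k : (s <= k)%N -> mxnat x k 0 = 0.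
Proof. by move=> sk; rewrite /mxnat insubN // -leqNgt. Qed.

Lemma col_cV (R : realType) s (x : 'cV[R]_s) : \col_j x j 0 = x.
Proof. by apply/matrixP => i k; rewrite (ord1 k) mxE. Qed.

Lemma monotonic_abs_eq (R : realType) s (nv : 'cV[R]_s -> R) (u v : 'cV[R]_s) :
  monotonic nv -> (forall j, `|u j 0| = `|v j 0|) -> nv u = nv v.
Proof. by move=> nv_mono uv; apply/le_anti; rewrite !nv_mono // => j; rewrite uv. Qed.

Section LpNorm.
Variables (R : realType) (p : \bar R).
Hypothesis p_ge1 : (1%:E <= p)%E.

Lemma Lp_norm_ge0 s (x : 'cV[R]_s) : 0 <= Lp_norm p x.
Proof. by case: p => [q||] /=; rewrite ?powR_ge0 ?bigmax_ge_id. Qed.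

Lemma Lnorm_counting_col (q : R) s (x : 'cV[R]_s) : 0 < q ->
  Lnorm counting q%:E (EFin \o fun k => mxnat x k 0) = (Lp_norm q%:E x)%:E.
Proof.
move=> q_gt0; rewrite Lnorm_counting // (nneseries_split 0 s); last first.
  by move=> k; rewrite poweR_ge0.
rewrite add0n ereal_series_cond eseries0 ?adde0; last first.
  by move=> k _ /andP[sk _] /=; rewrite mxnat_col_out // normr0 powR0 ?gt_eqF.
rewrite big_mkord; under eq_bigr => j _ do rewrite /= mxnat_col.
by rewrite sumEFin poweR_EFin.
Qed.

Lemma Lp_normD_EFin (q : R) s (x y : 'cV[R]_s) : 1 <= q ->
  Lp_norm q%:E (x + y) <= Lp_norm q%:E x + Lp_norm q%:E y.
Proof.
move=> q_ge1; have q_gt0 := lt_le_trans ltr01 q_ge1.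
have /(_ _ _ q_ge1) := minkowski_EFin counting (f := fun k => mxnat x k 0)
  (g := fun k => mxnat y k 0) (p := q).
have -> : (fun k => mxnat x k 0) \+ (fun k => mxnat y k 0) = fun k => mxnat (x + y) k 0.
  apply/funext => k /=; have [ks|sk] := ltnP k s; last by rewrite !mxnat_col_out ?addr0.
  by rewrite -[k]/(nat_of_ord (Ordinal ks)) !mxnat_col mxE.
by rewrite !Lnorm_counting_col // -EFinD lee_fin; apply.
Qed.

Lemma Lp_norm_eq0 s (x : 'cV[R]_s) : Lp_norm p x = 0 -> x = 0.
Proof.
move=> x0; apply/matrixP => i k; rewrite (ord1 k) mxE; apply/normr0_eq0.
apply/le_anti; rewrite normr_ge0 andbT; move: x0.
case: p p_ge1 => [q||] //= q_ge1; last by move <-; exact: (le_bigmax _ (fun j => `|x j 0|)).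
move=> /powR_eq0_eq0/eqP; rewrite psumr_eq0 => [|j _]; last exact: powR_ge0.
by move=> /allP/(_ i (mem_index_enum i))/eqP/powR_eq0_eq0 ->.
Qed.

Lemma Lp_normZ a s (x : 'cV[R]_s) : Lp_norm p (a *: x) = `|a| * Lp_norm p x.
Proof.
case: p p_ge1 => [q||] //= q_ge1.
  have q_gt0 := lt_le_trans ltr01 q_ge1.
  under eq_bigr => j _ do rewrite mxE normrM powRM //.
  have S_ge0 : 0 <= \sum_j `|x j 0| `^ q by apply: sumr_ge0 => j _; exact: powR_ge0.
  by rewrite -mulr_sumr powRM ?powR_ge0 // -powRrM mulfV ?gt_eqF // powRr1.
rewrite (big_morph (fun t => `|a| * t) (id1 := 0) (op1 := Num.max)) ?mulr0 //.
  by apply: eq_bigr => j _; rewrite mxE normrM.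
by move=> u v; rewrite maxr_pMr.
Qed.

Lemma Lp_normD s (x y : 'cV[R]_s) : Lp_norm p (x + y) <= Lp_norm p x + Lp_norm p y.
Proof.
case: p p_ge1 => [q||] //= q_ge1; first exact: Lp_normD_EFin.
apply: bigmax_le => [|j _]; first by rewrite addr_ge0 ?bigmax_ge_id.
rewrite mxE; apply: le_trans (ler_normD _ _) (lerD _ _);
  exact: (le_bigmax _ (fun j => `|_ j 0|) j).
Qed.

Lemma Lp_norm_is_norm s : is_norm (@Lp_norm R p s).
Proof. by split; [exact: Lp_norm_eq0 | move=> a x; rewrite Lp_normZ | exact: Lp_normD]. Qed.

Lemma Lp_norm_monotonic s : monotonic (@Lp_norm R p s).
Proof.
move=> u v uv; case: p p_ge1 => [q||] //= q_ge1.
  have q_gt0 := lt_le_trans ltr01 q_ge1.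
  have S_ge0 (w : 'cV[R]_s) : 0 <= \sum_j `|w j 0| `^ q.
    by apply: sumr_ge0 => j _; exact: powR_ge0.
  apply: ge0_ler_powR; rewrite ?nnegrE ?S_ge0 ?invr_ge0 ?(ltW q_gt0) //.
  by apply: ler_sum => j _; apply: ge0_ler_powR; rewrite ?nnegrE ?(ltW q_gt0).
apply: bigmax_le => [|j _]; first exact: bigmax_ge_id.
exact: le_trans (uv j) (le_bigmax _ (fun j => `|v j 0|) j).
Qed.

End LpNorm.

Arguments Lp_norm_monotonic {R p} p_ge1 s.

(** * Kronecker products and Kronecker sums *)

Lemma eq_mxtens_unindex a b (r c : 'I_(a * b)) :
  (r == c) = ((mxtens_unindex r).1 == (mxtens_unindex c).1)
             && ((mxtens_unindex r).2 == (mxtens_unindex c).2).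
Proof.
rewrite -(can_eq (@mxtens_unindexK a b)) [mxtens_unindex r]surjective_pairing.
by rewrite [mxtens_unindex c]surjective_pairing xpair_eqE.
Qed.

Lemma big_mxtens_index (V : nmodType) a b (F : 'I_(a * b) -> V) :
  \sum_r F r = \sum_i \sum_j F (mxtens_index (i, j)).
Proof.
rewrite pair_big (reindex (@mxtens_index a b)) /=; first by apply: eq_bigr => -[i j].
by exists (@mxtens_unindex a b) => ? _; [exact: mxtens_indexK | exact: mxtens_unindexK].
Qed.

Lemma col_mxtens_index (R : realType) a b (z : 'cV[R]_(a * b)) :
  \col_r z (mxtens_index ((mxtens_unindex r).1, (mxtens_unindex r).2)) 0 = z.
Proof. by apply/matrixP => r k; rewrite (ord1 k) mxE -surjective_pairing mxtens_unindexK. Qed.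

Section LpReshape.
Variables (R : realType) (p : \bar R).
Hypothesis p_ge1 : (1%:E <= p)%E.

Lemma Lp_norm_reshape a b c (h : 'I_a * 'I_b -> 'I_c) (h' : 'I_c -> 'I_a * 'I_b)
    (F : 'I_a -> 'I_b -> R) :
  cancel h h' -> cancel h' h ->
  Lp_norm p (\col_r F (h' r).1 (h' r).2) = Lp_norm p (\col_i Lp_norm p (\col_j F i j)).
Proof.
move=> hK h'K; case: p p_ge1 => [q||] //= q_ge1.
  have q_gt0 := lt_le_trans ltr01 q_ge1; congr (_ `^ _).
  have -> : \sum_r `|(\col_r F (h' r).1 (h' r).2) r 0| `^ q = \sum_i \sum_j `|F i j| `^ q.
    rewrite pair_big (reindex h) /=; last by exists h' => ? _; [exact: hK | exact: h'K].
    by apply: eq_bigr => -[i j] _; rewrite mxE hK.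
  apply: eq_bigr => i _.
  rewrite mxE ger0_norm ?powR_ge0 // -powRrM mulVf ?gt_eqF // powRr1; last first.
    by apply: sumr_ge0 => j _; exact: powR_ge0.
  by apply: eq_bigr => j _; rewrite mxE.
apply/le_anti/andP; split.
  apply: bigmax_le => [|r _]; first exact: bigmax_ge_id.
  apply: (bigmax_sup (h' r).1) => //; rewrite !mxE [leRHS]ger0_norm ?bigmax_ge_id //.
  by apply: (bigmax_sup (h' r).2) => //; rewrite !mxE.
apply: bigmax_le => [|i _]; first exact: bigmax_ge_id.
rewrite mxE ger0_norm ?bigmax_ge_id //; apply: bigmax_le => [|j _]; first exact: bigmax_ge_id.
by apply: (bigmax_sup (h (i, j))) => //; rewrite !mxE hK.
Qed.

Lemma Lp_norm_mxtensl a b (F : 'I_a -> 'I_b -> R) :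
  Lp_norm p (\col_r F (mxtens_unindex r).1 (mxtens_unindex r).2)
  = Lp_norm p (\col_i Lp_norm p (\col_j F i j)).
Proof. exact: Lp_norm_reshape (@mxtens_indexK a b) (@mxtens_unindexK a b). Qed.

Lemma Lp_norm_mxtensr a b (F : 'I_a -> 'I_b -> R) :
  Lp_norm p (\col_r F (mxtens_unindex r).1 (mxtens_unindex r).2)
  = Lp_norm p (\col_j Lp_norm p (\col_i F i j)).
Proof.
pose h (ji : 'I_b * 'I_a) := mxtens_index (ji.2, ji.1).
pose h' (r : 'I_(a * b)) := ((mxtens_unindex r).2, (mxtens_unindex r).1).
apply: (Lp_norm_reshape (h := h) (h' := h') (fun j i => F i j)) => [[j i]|r].
  by rewrite /h /h' mxtens_indexK.
by rewrite /h /h'; have := @mxtens_unindexK a b r; case: mxtens_unindex.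
Qed.

End LpReshape.

Section OpnormProduct.
Variables (R : realType) (s t : nat).
Variables (nv : 'cV[R]_s -> R) (nw : 'cV[R]_t -> R).
Hypotheses (nv_norm : is_norm nv) (nv_mono : monotonic nv) (s_gt0 : (0 < s)%N).
Hypotheses (nw_norm : is_norm nw) (nw_mono : monotonic nw) (t_gt0 : (0 < t)%N).

Lemma opnorm_mul_le X Y K : 0 <= K ->
    (forall u v, nv (X *m u) * nw (Y *m v) <= K * (nv u * nw v)) ->
  opnorm nv X * opnorm nw Y <= K.
Proof.
move=> K_ge0 XY_le.
have XY_le' v : opnorm nv X * nw (Y *m v) <= K * nw v.
  have [Yv0|Yv_neq0] := eqVneq (nw (Y *m v)) 0.
    by rewrite Yv0 mulr0 mulr_ge0 ?norm_ge0.
  have Yv_gt0 : 0 < nw (Y *m v) by rewrite lt_neqAle eq_sym Yv_neq0 norm_ge0.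
  rewrite -ler_pdivlMr //; apply: opnorm_le => // u.
  by rewrite mulrAC ler_pdivlMr // mulrAC -mulrA XY_le.
have [X0|X_neq0] := eqVneq (opnorm nv X) 0; first by rewrite X0 mul0r.
have X_gt0 : 0 < opnorm nv X by rewrite lt_neqAle eq_sym X_neq0 opnorm_ge0.
rewrite mulrC -ler_pdivlMr //; apply: opnorm_le => // v.
by rewrite mulrAC ler_pdivlMr // mulrC.
Qed.

End OpnormProduct.

Section Kronecker.
Variables (R : realType) (a b : nat).
Implicit Types (X : 'M[R]_a) (Y : 'M[R]_b) (u : 'cV[R]_a) (v : 'cV[R]_b).

Lemma kronE X Y r c :
  kron X Y r c = X (mxtens_unindex r).1 (mxtens_unindex c).1
                 * Y (mxtens_unindex r).2 (mxtens_unindex c).2.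
Proof. by rewrite /kron mxE -!mxnatE. Qed.

Lemma kron_mul_mxtens_index X Y (z : 'cV[R]_(a * b)) i j :
  (kron X Y *m z) (mxtens_index (i, j)) 0
  = \sum_l X i l * \sum_m Y j m * z (mxtens_index (l, m)) 0.
Proof.
rewrite mxE big_mxtens_index; apply: eq_bigr => l _; rewrite mulr_sumr.
by apply: eq_bigr => m _; rewrite kronE !mxtens_indexK mulrA.
Qed.

Definition tensor_col u v : 'cV[R]_(a * b) :=
  \col_r (u (mxtens_unindex r).1 0 * v (mxtens_unindex r).2 0).

Lemma kron_mul_tensor X Y u v : kron X Y *m tensor_col u v = tensor_col (X *m u) (Y *m v).
Proof.
apply/matrixP => r k; rewrite (ord1 k) !mxE big_mxtens_index big_distrlr /=.
apply: eq_bigr => i _; apply: eq_bigr => j _.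
by rewrite kronE !mxE mxtens_indexK mulrACA.
Qed.

Variable p : \bar R.
Hypotheses (p_ge1 : (1%:E <= p)%E) (a_gt0 : (0 < a)%N) (b_gt0 : (0 < b)%N).
Let Lp_is_norm s : is_norm (@Lp_norm R p s) := Lp_norm_is_norm p_ge1 s.
Let Lp_scale s k (c : 'I_s -> R) := norm_col_scale (Lp_is_norm s) k c.
Let Lp_opnorm_ub s := opnorm_ub (Lp_is_norm s) (Lp_norm_monotonic p_ge1 s).
Let Lp_opnorm_ge0 s := opnorm_ge0 (Lp_is_norm s) (Lp_norm_monotonic p_ge1 s).
Local Notation opn X := (opnorm (Lp_norm p) X).

Lemma Lp_norm_tensor u v : Lp_norm p (tensor_col u v) = Lp_norm p u * Lp_norm p v.
Proof.
have Lp_abs s (w : 'cV[R]_s) : Lp_norm p (\col_j `|w j 0|) = Lp_norm p w.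
  by apply: (monotonic_abs_eq (Lp_norm_monotonic p_ge1 s)) => j; rewrite mxE normr_id.
rewrite /tensor_col (Lp_norm_mxtensl p_ge1 (fun i j => u i 0 * v j 0)).
have -> : \col_i Lp_norm p (\col_j (u i 0 * v j 0)) = \col_i (Lp_norm p v * `|u i 0|).
  by apply/matrixP => i k; rewrite !mxE Lp_scale col_cV mulrC.
by rewrite Lp_scale Lp_abs ger0_norm ?Lp_norm_ge0 // mulrC.
Qed.

Lemma Lp_norm_kron_mul_le X Y z :
  Lp_norm p (kron X Y *m z) <= opn X * opn Y * Lp_norm p z.
Proof.
set y := kron X Y *m z; pose W l := Y *m \col_m z (mxtens_index (l, m)) 0.
have y_col j : \col_i y (mxtens_index (i, j)) 0 = X *m \col_l W l j 0.
  apply/matrixP => i k; rewrite (ord1 k) mxE /y kron_mul_mxtens_index !mxE.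
  by apply: eq_bigr => l _; rewrite !mxE; congr (_ * _); apply: eq_bigr => m _; rewrite mxE.
rewrite -[y]col_mxtens_index (Lp_norm_mxtensr p_ge1 (fun i j => y (mxtens_index (i, j)) 0)).
apply: le_trans (_ : Lp_norm p (\col_j (opn X * Lp_norm p (\col_l W l j 0))) <= _).
  apply: (monotonic_col_le (Lp_norm_monotonic p_ge1 _)) => j.
  by rewrite Lp_norm_ge0 y_col Lp_opnorm_ub.
rewrite Lp_scale ger0_norm ?Lp_opnorm_ge0 // -mulrA ler_wpM2l ?Lp_opnorm_ge0 //.
rewrite -(Lp_norm_mxtensr p_ge1 (fun l j => W l j 0)) (Lp_norm_mxtensl p_ge1 (fun l j => W l j 0)).
apply: le_trans (_ : Lp_norm p (\col_l (opn Y * Lp_norm p (\col_m z (mxtens_index (l, m)) 0)))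
                     <= _).
  apply: (monotonic_col_le (Lp_norm_monotonic p_ge1 _)) => l.
  by rewrite Lp_norm_ge0 col_cV Lp_opnorm_ub.
rewrite Lp_scale ger0_norm ?Lp_opnorm_ge0 // ler_wpM2l ?Lp_opnorm_ge0 //.
by rewrite -(Lp_norm_mxtensl p_ge1) col_mxtens_index.
Qed.

Lemma opnorm_kron X Y : opn (kron X Y) = opn X * opn Y.
Proof.
have ab_gt0 : (0 < a * b)%N by rewrite muln_gt0 a_gt0.
apply/le_anti/andP; split.
  apply: (opnorm_le (Lp_is_norm _) (Lp_norm_monotonic p_ge1 _) ab_gt0) => z.
  exact: Lp_norm_kron_mul_le.
apply: (opnorm_mul_le (Lp_is_norm _) (Lp_norm_monotonic p_ge1 _) a_gt0
                      (Lp_is_norm _) (Lp_norm_monotonic p_ge1 _) b_gt0).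
  exact: Lp_opnorm_ge0.
by move=> u v; rewrite -!Lp_norm_tensor -kron_mul_tensor Lp_opnorm_ub.
Qed.

End Kronecker.

Section KroneckerSum.
Variables (R : realType) (a b : nat) (p : \bar R).
Hypotheses (p_ge1 : (1%:E <= p)%E) (a_gt0 : (0 < a)%N) (b_gt0 : (0 < b)%N).
Variables (A : 'M[R]_a) (B : 'M[R]_b).
Let Lp_is_norm s : is_norm (@Lp_norm R p s) := Lp_norm_is_norm p_ge1 s.
Local Notation opn X := (opnorm (Lp_norm p) X).

Lemma kronsum_shift e :
  1%:M + e *: kronsum A B = kron (1%:M + e *: A) (1%:M + e *: B) - (e * e) *: kron A B.
Proof.
apply/matrixP => r c; rewrite /kronsum [@kron R]lock !mxE -lock !kronE !mxE eq_mxtens_unindex.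
by case: eqP => _; case: eqP => _ /=; ring.
Qed.

Lemma opnorm_kronsum_shift e : 0 < e ->
  `|opn (1%:M + e *: kronsum A B) - opn (1%:M + e *: A) * opn (1%:M + e *: B)|
    <= e * e * opn (kron A B).
Proof.
move=> e_gt0; have ab_gt0 : (0 < a * b)%N by rewrite muln_gt0 a_gt0.
have opnD := opnormD (Lp_is_norm _) (Lp_norm_monotonic p_ge1 _) ab_gt0.
have opnZ : opn ((e * e) *: kron A B) <= e * e * opn (kron A B).
  apply: le_trans (opnormZ (Lp_is_norm _) (Lp_norm_monotonic p_ge1 _) ab_gt0 _ _) _.
  by rewrite ger0_norm // mulr_ge0 ?ltW.
have opnN := opnormN (Lp_is_norm _) (Lp_norm_monotonic p_ge1 _) ab_gt0.
rewrite -opnorm_kron //.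
have upper : opn (1%:M + e *: kronsum A B)
    <= opn (kron (1%:M + e *: A) (1%:M + e *: B)) + e * e * opn (kron A B).
  by rewrite kronsum_shift; apply: le_trans (opnD _ _) _; rewrite opnN lerD2l.
have lower : opn (kron (1%:M + e *: A) (1%:M + e *: B))
    <= opn (1%:M + e *: kronsum A B) + e * e * opn (kron A B).
  rewrite -[kron _ _](subrK ((e * e) *: kron A B)) -kronsum_shift.
  by apply: le_trans (opnD _ _) _; rewrite lerD2l.
by rewrite ler_norml; apply/andP; split; lra.
Qed.


Lemma matmeas_kronsum :
  matmeas (Lp_norm p) (kronsum A B) = matmeas (Lp_norm p) A + matmeas (Lp_norm p) B.
Proof.
set mA := matmeas (Lp_norm p) A; set mB := matmeas (Lp_norm p) B.
set qA := meas_quot (Lp_norm p) A; set qB := meas_quot (Lp_norm p) B.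
set K := opn (kron A B).
(* Since [opn (1 + e X) = 1 + e * meas_quot X e], [main e] is the difference quotient of
   [opn (1 + e A) * opn (1 + e B)]; by [opnorm_kronsum_shift], [err e] is O(e). *)
pose main e := qA e + qB e + e * (qA e * qB e).
pose err e := meas_quot (Lp_norm p) (kronsum A B) e - main e.
have e_cvg : e @[e --> 0^'+] --> (0 : R) by apply: cvg_at_right_filter; exact: cvg_id.
have main_cvg : main e @[e --> 0^'+] --> mA + mB + 0 * (mA * mB).
  have qA_cvg := meas_quot_cvg (Lp_is_norm _) (Lp_norm_monotonic p_ge1 _) a_gt0 A.
  have qB_cvg := meas_quot_cvg (Lp_is_norm _) (Lp_norm_monotonic p_ge1 _) b_gt0 B.
  by apply: cvgD; [exact: cvgD | apply: cvgM => //; exact: cvgM].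
have eK_cvg : e * K @[e --> 0^'+] --> (0 : R).
  by rewrite -[X in _ --> X](mul0r K); apply: cvgM => //; exact: cvg_cst.
have err_cvg : err e @[e --> 0^'+] --> (0 : R).
  apply: (squeeze_cvgr (f := fun e => - (e * K)) (h := fun e => e * K));
    [|by rewrite -[X in _ --> X]oppr0; exact: cvgN|exact: eK_cvg].
  near=> e; have e_gt0 : 0 < e by near: e; exact: nbhs_right_gt.
  have -> : err e = (opn (1%:M + e *: kronsum A B)
                     - opn (1%:M + e *: A) * opn (1%:M + e *: B)) / e.
    by rewrite /err /main /qA /qB /meas_quot; field; rewrite gt_eqF.
  have := opnorm_kronsum_shift e_gt0; rewrite ler_norml -/K => /andP[lo hi].
  by rewrite ler_pdivlMr // ler_pdivrMr //; apply/andP; split; lra.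
have quot_cvg : main e + err e @[e --> 0^'+] --> mA + mB + 0 * (mA * mB) + 0.
  exact: cvgD.
rewrite mul0r !addr0 in quot_cvg.
suff kron_cvg : meas_quot (Lp_norm p) (kronsum A B) e @[e --> 0^'+] --> mA + mB.
  exact: cvg_lim kron_cvg.
apply: cvg_trans quot_cvg; apply: near_eq_cvg; near=> e.
by rewrite /err addrC subrK.
Unshelve. all: by end_near.
Qed.

End KroneckerSum.

(** * Block-diagonal matrices *)

Section MaxLimits.
Variable R : realType.

Lemma homo_bigmax I (s : seq I) (F : I -> R) x0 (f : R -> R) :
  {homo f : x y / x <= y} ->
  f (\big[Num.max/x0]_(i <- s) F i) = \big[Num.max/f x0]_(i <- s) f (F i).
Proof.
move=> f_mono; apply: big_morph => // x y.
case: (leP x y) => [xy|/ltW yx]; first by rewrite max_r ?f_mono.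
by rewrite max_l ?f_mono.
Qed.

Lemma cvg_max T (F : set_system T) {FF : Filter F} (f g : T -> R) a b :
  f x @[x --> F] --> a -> g x @[x --> F] --> b ->
  Num.max (f x) (g x) @[x --> F] --> Num.max a b.
Proof.
move=> fa gb; under eq_cvg do rewrite maxr_absE; rewrite maxr_absE.
by apply: cvgM; [apply: cvgD; [exact: cvgD | apply: cvg_norm; exact: cvgB] | exact: cvg_cst].
Qed.

Lemma cvg_bigmax T (F : set_system T) {FF : Filter F} I (s : seq I)
    (f0 : T -> R) (l0 : R) (f : I -> T -> R) (l : I -> R) :
  f0 x @[x --> F] --> l0 -> (forall i, f i x @[x --> F] --> l i) ->
  \big[Num.max/f0 x]_(i <- s) f i x @[x --> F] --> \big[Num.max/l0]_(i <- s) l i.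
Proof.
move=> f0_cvg f_cvg; elim: s => [|i s IHs].
  by rewrite big_nil; under eq_cvg do rewrite big_nil.
under eq_cvg do rewrite big_cons; rewrite big_cons; exact: cvg_max.
Qed.

End MaxLimits.

Lemma submxcolZ (R : pzRingType) r (n_ : 'I_r -> nat) m (a : R)
    (y : 'M[R]_(\sum_i n_ i, m)) i :
  submxcol (a *: y) i = a *: submxcol y i.
Proof. by apply/matrixP => j k; rewrite !mxE. Qed.

Section BlockNorm.
Variables (R : realType) (r : nat) (n_ : 'I_r.+1 -> nat).
Variables (nvs : forall i, 'cV[R]_(n_ i) -> R) (nv0 : 'cV[R]_r.+1 -> R).
Arguments nvs : clear implicits.
Hypothesis nvs_norm : forall i : 'I_r.+1, is_norm (nvs i).
Hypothesis nvs_mono : forall i : 'I_r.+1, monotonic (nvs i).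
Arguments nvs_mono : clear implicits.
Hypothesis n_gt0 : forall i, (0 < n_ i)%N.
Hypotheses (nv0_norm : is_norm nv0) (nv0_mono : monotonic nv0).
Local Notation N := (\sum_i n_ i)%N.

Definition block_norm (y : 'cV[R]_N) := nv0 (\col_i nvs i (submxcol y i)).

Lemma block_norm_is_norm : is_norm block_norm.
Proof.
case: nv0_norm => nv0_eq0 nv0Z nv0D; split.
- move=> y /nv0_eq0/matrixP y0; rewrite -[y]submxcolK -[RHS](mxcol0 (p_ := n_)).
  apply/eq_mxcol => i; have := y0 i 0; rewrite !mxE.
  by case: (nvs_norm i) => nvs_eq0 _ _ /nvs_eq0.
- move=> a y; rewrite /block_norm -[`|a|]normr_id -(norm_col_scale nv0_norm); congr nv0.
  apply/matrixP => i k; rewrite !mxE submxcolZ.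
  by case: (nvs_norm i) => _ nvsZ _; rewrite nvsZ.
- move=> x y; rewrite /block_norm; apply: le_trans (nv0D _ _).
  have -> : \col_i nvs i (submxcol x i) + \col_i nvs i (submxcol y i) =
            \col_i (nvs i (submxcol x i) + nvs i (submxcol y i)).
    by apply/matrixP => i k; rewrite !mxE.
  apply: (monotonic_col_le nv0_mono) => i; rewrite submxcolD norm_ge0 //=.
  by case: (nvs_norm i) => _ _ ->.
Qed.

Lemma block_norm_monotonic : monotonic block_norm.
Proof.
move=> u v uv; apply: (monotonic_col_le nv0_mono) => i.
by rewrite norm_ge0 //=; apply: nvs_mono => j; rewrite !mxE.
Qed.

Lemma block_norm_supported i (y : 'cV[R]_N) :
    (forall j, j != i -> submxcol y j = 0) ->
  block_norm y = nvs i (submxcol y i) * nv0 (delta_mx i 0).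
Proof.
move=> y_supp; case: nv0_norm => _ nv0Z _.
rewrite /block_norm -[nvs i _]ger0_norm ?norm_ge0 // -nv0Z; congr nv0.
apply/matrixP => j k; rewrite (ord1 k) !mxE eqxx andbT.
by case: eqVneq => [->|/y_supp ->]; rewrite ?mulr1 // mulr0 norm0.
Qed.

Lemma opnorm_blockwise (M : 'M[R]_N) (Ms : forall i, 'M[R]_(n_ i)) :
    (forall (y : 'cV[R]_N) i, submxcol (M *m y) i = Ms i *m submxcol y i) ->
  opnorm block_norm M = \big[Num.max/opnorm (nvs ord0) (Ms ord0)]_i opnorm (nvs i) (Ms i).
Proof.
move=> M_blocks; have N_gt0 : (0 < N)%N.
  by rewrite (bigD1 ord0) //= ltn_addr ?n_gt0.
have opnorm_Ms_le i : opnorm (nvs i) (Ms i) <= opnorm block_norm M.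
  apply: opnorm_le => // w.
  set y : 'cV[R]_N := \mxcol_j (if j == i then conform_mx 0 w else 0).
  have y_i : submxcol y i = w by rewrite mxcolK eqxx conform_mx_id.
  have y_supp j : j != i -> submxcol y j = 0 by rewrite mxcolK => /negbTE ->.
  have My_supp j : j != i -> submxcol (M *m y) j = 0.
    by move=> ji; rewrite M_blocks y_supp // mulmx0.
  have e_gt0 : 0 < nv0 (delta_mx i 0) by rewrite norm_gt0 ?delta_mx_neq0.
  have := opnorm_ub block_norm_is_norm block_norm_monotonic N_gt0 M y.
  rewrite (block_norm_supported My_supp) (block_norm_supported y_supp) M_blocks y_i.
  by rewrite mulrA ler_pM2r.
apply/le_anti/andP; split; last by apply: bigmax_le => // i _; exact: opnorm_Ms_le.
apply: (opnorm_le block_norm_is_norm block_norm_monotonic N_gt0) => y.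
set c := \big[Num.max/_]_i _.
have c_ge0 : 0 <= c by apply: le_trans (le_bigmax _ _ ord0); exact: opnorm_ge0.
rewrite /block_norm -[c]ger0_norm // -(norm_col_scale nv0_norm).
apply: (monotonic_col_le nv0_mono) => i; rewrite norm_ge0 //= M_blocks.
apply: le_trans (opnorm_ub (nvs_norm i) (nvs_mono i) (n_gt0 i) _ _) _.
by rewrite ler_wpM2r ?norm_ge0 // (le_bigmax _ (fun i => opnorm (nvs i) (Ms i)) i).
Qed.

Lemma matmeas_mxdiag (Ms : forall i, 'M[R]_(n_ i)) :
  matmeas block_norm (mxdiag Ms)
  = \big[Num.max/matmeas (nvs ord0) (Ms ord0)]_i matmeas (nvs i) (Ms i).
Proof.
have quotE e : 0 < e -> meas_quot block_norm (mxdiag Ms) e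
    = \big[Num.max/meas_quot (nvs ord0) (Ms ord0) e]_i meas_quot (nvs i) (Ms i) e.
  move=> e_gt0; rewrite /meas_quot (opnorm_blockwise (Ms := fun i => 1%:M + e *: Ms i)).
    apply: (@homo_bigmax R _ _ _ _ (fun t => (t - 1) / e)) => x y xy.
    by rewrite ler_pM2r ?invr_gt0 // lerD2r.
  move=> y i; rewrite mulmxDl mul1mx -scalemxAl submxcolD submxcolZ.
  by rewrite -[y]submxcolK mul_mxdiag_mxcol !mxcolK mulmxDl mul1mx -scalemxAl.
suff quot_cvg : meas_quot block_norm (mxdiag Ms) e @[e --> 0^'+] -->
    \big[Num.max/matmeas (nvs ord0) (Ms ord0)]_i matmeas (nvs i) (Ms i).
  exact: cvg_lim quot_cvg.
have max_cvg : \big[Num.max/meas_quot (nvs ord0) (Ms ord0) e]_i meas_quot (nvs i) (Ms i) e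
    @[e --> 0^'+] --> \big[Num.max/matmeas (nvs ord0) (Ms ord0)]_i matmeas (nvs i) (Ms i).
  by apply: cvg_bigmax => [|i]; exact: (meas_quot_cvg (nvs_norm _) (nvs_mono _) (n_gt0 _)).
apply: cvg_trans _ max_cvg; apply: near_eq_cvg; near=> e.
have e_gt0 : 0 < e by near: e; exact: nbhs_right_gt.
by rewrite /= quotE.
Unshelve. all: by end_near.
Qed.

End BlockNorm.

Section ChangeOfCoordinates.
Variables (R : realType) (s t : nat) (nv : 'cV[R]_s -> R).
Variables (Q : 'M[R]_(s, t)) (Q' : 'M[R]_(t, s)).
Hypotheses (QK : Q' *m Q = 1%:M) (Q'K : Q *m Q' = 1%:M).

Lemma opnorm_conj (X : 'M[R]_t) (Y : 'M[R]_s) :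
  Q *m X = Y *m Q -> opnorm (fun x => nv (Q *m x)) X = opnorm nv Y.
Proof.
move=> QX; rewrite /opnorm; congr sup; apply/seteqP; split => _ [x /= x_neq0 <-].
  exists (Q *m x); last by rewrite mulmxA -QX -mulmxA.
  by apply: contra x_neq0 => /eqP Qx0; rewrite -[x]mul1mx -QK -mulmxA Qx0 mulmx0.
have QQ'x : Q *m (Q' *m x) = x by rewrite mulmxA Q'K mul1mx.
exists (Q' *m x); last by rewrite QQ'x mulmxA QX -mulmxA QQ'x.
by apply: contra x_neq0 => /eqP Q'x0; rewrite -QQ'x Q'x0 mulmx0.
Qed.

Lemma matmeas_conj (M : 'M[R]_t) (M' : 'M[R]_s) :
  Q *m M = M' *m Q -> matmeas (fun x => nv (Q *m x)) M = matmeas nv M'.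
Proof.
move=> QM; have quotE : (fun e => (opnorm (fun x => nv (Q *m x)) (1%:M + e *: M) - 1) / e)
    = (fun e => (opnorm nv (1%:M + e *: M') - 1) / e).
  apply/funext => e; rewrite (opnorm_conj (Y := 1%:M + e *: M')) //.
  by rewrite mulmxDr mulmxDl mulmx1 mul1mx -scalemxAr -scalemxAl QM.
by rewrite /matmeas quotE.
Qed.

End ChangeOfCoordinates.

Lemma matmeas_similar_castmx (R : realType) N s (E : N = s) (nv : 'cV[R]_N -> R)
    (P : 'M[R]_s) (D : 'M[R]_N) : P \in unitmx ->
  matmeas (fun x => nv (castmx (esym E, erefl) (invmx P *m x))) (P *m castmx (E, E) D *m invmx P)
  = matmeas nv D.
Proof.
move=> P_unit; case: s / E in P P_unit *; rewrite castmx_id.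
have -> : (fun x => nv (castmx (erefl, erefl) (invmx P *m x))) = fun x => nv (invmx P *m x).
  by apply/funext => x; rewrite castmx_id.
apply: (@matmeas_conj _ _ _ nv (invmx P) P); [exact: mulmxV | exact: mulVmx |].
by rewrite !mulmxA mulVmx // mul1mx.
Qed.

Lemma bdim_factorl_gt0 n m k (i : 'I_(ihi m k - ilo n k).+1) :
  (0 < 'C(n, k - (ilo n k + i)))%N.
Proof. by rewrite bin_gt0; have := ltn_ord i; rewrite /ilo /ihi; lia. Qed.

Lemma bdim_factorr_gt0 n m k (i : 'I_(ihi m k - ilo n k).+1) :
  (k <= n + m)%N -> (0 < 'C(m, ilo n k + i))%N.
Proof. by rewrite bin_gt0; have := ltn_ord i; rewrite /ilo /ihi; lia. Qed.

Theorem corollary1 (R : realType) (n m k : nat) (A : 'M[R]_n) (B : 'M[R]_m)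
  (hk0 : (0 < k)%N) (hk : (k <= n + m)%N)
  (p : 'I_(ihi m k - ilo n k).+1 -> \bar R)
  (hp : forall i, (1%:E <= p i)%E)
  (nu0 : 'cV[R]_(ihi m k - ilo n k).+1 -> R)
  (hnu0 : is_norm nu0) (hmon : monotonic nu0)
  (P : 'M[R]_('C(n + m, k))) (hP : is_perm_mx P)
  (hPC : addcomp k (block_mx A 0 0 B)
         = P *m castmx (bdim_sum hk, bdim_sum hk) (blockD k A B) *m invmx P) :
  let normx (x : 'cV[R]_('C(n + m, k))) :=
    nu0 (\col_i Lp_norm (p i)
           (@submxcol _ _ (bdim n m k) _ (castmx (esym (bdim_sum hk), erefl) x) i)) in
  let normP (x : 'cV[R]_('C(n + m, k))) := normx (invmx P *m x) in
  let f (i : 'I_(ihi m k - ilo n k).+1) :=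
    matmeas (Lp_norm (p i)) (addcomp (k - (ilo n k + i)) A)
    + matmeas (Lp_norm (p i)) (addcomp (ilo n k + i) B) in
  let g (i : 'I_(ihi m k - ilo n k).+1) :=
    - matmeas (Lp_norm (p i)) (- addcomp (k - (ilo n k + i)) A)
    - matmeas (Lp_norm (p i)) (- addcomp (ilo n k + i) B) in
  matmeas normP (addcomp k (block_mx A 0 0 B)) = \big[Num.max/f ord0]_i f i
  /\ \big[Num.min/g ord0]_i g i <= matmeas normP (addcomp k (block_mx A 0 0 B)).
Proof.
move=> normx normP f g.
have P_unit : P \in unitmx by case/is_perm_mxP: hP => s ->; exact: unitmx_perm.
have meas_eq : matmeas normP (addcomp k (block_mx A 0 0 B)) = \big[Num.max/f ord0]_i f i.
  have -> : normP = fun x => block_norm (fun i => @Lp_norm R (p i) (bdim n m k i)) nu0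
                               (castmx (esym (bdim_sum hk), erefl) (invmx P *m x)) by [].
  have -> : f = fun i => matmeas (Lp_norm (p i))
      (kronsum (addcomp (k - (ilo n k + i)) A) (addcomp (ilo n k + i) B)).
    by apply/funext => i; rewrite matmeas_kronsum ?bdim_factorl_gt0 ?bdim_factorr_gt0.
  rewrite hPC matmeas_similar_castmx //; apply: matmeas_mxdiag => // i.
  - exact: Lp_norm_is_norm.
  - exact: Lp_norm_monotonic.
  - by rewrite muln_gt0 bdim_factorl_gt0 bdim_factorr_gt0.
split=> //; rewrite meas_eq.
apply: (@le_trans _ _ (g ord0)); first exact: bigmin_le.
apply: (@le_trans _ _ (f ord0)); last exact: le_bigmax.
by apply: lerD; apply: matmeasN_le; rewrite ?bdim_factorl_gt0 ?bdim_factorr_gt0 //;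
  solve [exact: Lp_norm_is_norm | exact: Lp_norm_monotonic].
Qed.
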